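(* Let $\widetilde\nabla$ be the canonical snm-connection on $\mathbb R^3$ determined by $\mathsf C=\partial_z$, and let $M$ be the rotational surface $\psi(s,t)=(x(s)\cos t,x(s)\sin t,z(s))$, $s\in I$, $t\in\mathbb R$, with $I$ an open interval, $x>0$, $x'^2+z'^2=1$. If the generating curve $s\mapsto(x(s),z(s))$ is an arc of a circle, i.e. $(x(s),z(s))=(c_1,c_2)+r(\cos(s/r),\sin(s/r))$ for constants $c_1,c_2\in\mathbb R$, $r>0$, then the sectional curvature $K$ of $M$ with respect to $\widetilde\nabla$ is not constant.
   Context: Let $\langle\cdot,\cdot\rangle$ be the Euclidean metric on $\mathbb R^3$ and $\widetilde\nabla^0$ its Levi-Civita connection (the ordinary directional derivative). Given a smooth vector field $\mathsf C$ on $\mathbb R^3$, the semi-symmetric non-metric connection (snm-connection) determined by $\mathsf C$ is $\widetilde\nabla_XY=\widetilde\nabla^0_XY+\langle \mathsf C,Y\rangle X$. Its curvature tensor is $\widetilde R(X,Y)Z=\widetilde\nabla_X\widetilde\nabla_YZ-\widetilde\nabla_Y\widetilde\nabla_XZ-\widetilde\nabla_{[X,Y]}Z$. For a surface $M$ immersed in $\mathbb R^3$, the induced connection is $\nabla_XY=(\widetilde\nabla_XY)^{\top}$ (tangential component), with curvature tensor $R$ defined by the same formula, and the sectional curvature of $M$ with respect to $\widetilde\nabla$ at $p$ is $K(p)=\frac12\big(\langle R(e_1,e_2)e_2,e_1\rangle+\langle R(e_2,e_1)e_1,e_2\rangle\big)$ for an orthonormal basis $\{e_1,e_2\}$ of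 $T_pM$. *)

From Stdlib Require Import Reals.
From Coquelicot Require Import Coquelicot.
Open Scope R_scope.

Definition V3 : Type := (R * R * R)%type.
Definition v1 (v : V3) : R := fst (fst v).
Definition v2 (v : V3) : R := snd (fst v).
Definition v3 (v : V3) : R := snd v.
Definition mkV (a b c : R) : V3 := (a, b, c).
Definition vadd (u v : V3) : V3 := mkV (v1 u + v1 v) (v2 u + v2 v) (v3 u + v3 v).
Definition vscal (k : R) (v : V3) : V3 := mkV (k * v1 v) (k * v2 v) (k * v3 v).
Definition vsub (u v : V3) : V3 := vadd u (vscal (-1) v).
Definition dot (u v : V3) : R := v1 u * v1 v + v2 u * v2 v + v3 u * v3 v.
Definition cross (u v : V3) : V3 :=
  mkV (v2 u * v3 v - v3 u * v2 v) (v3 u * v1 v - v1 u * v3 v) (v1 u * v2 v - v2 u * v1 v).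

(* The vector field C = d/dz determining the snm-connection. *)
Definition Cz : V3 := mkV 0 0 1.

Definition sfun := R -> R -> R.
Definition vfun := R -> R -> V3.

Definition ds (f : sfun) : sfun := fun s t => Derive (fun u => f u t) s.
Definition dt (f : sfun) : sfun := fun s t => Derive (fun u => f s u) t.
Definition dsV (F : vfun) : vfun := fun s t =>
  mkV (ds (fun a b => v1 (F a b)) s t) (ds (fun a b => v2 (F a b)) s t)
      (ds (fun a b => v3 (F a b)) s t).
Definition dtV (F : vfun) : vfun := fun s t =>
  mkV (dt (fun a b => v1 (F a b)) s t) (dt (fun a b => v2 (F a b)) s t)
      (dt (fun a b => v3 (F a b)) s t).

Section Surface.
Variables x z : R -> R.

Definition psi : vfun := fun s t => mkV (x s * cos t) (x s * sin t) (z s).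
Definition psi_s : vfun := dsV psi.
Definition psi_t : vfun := dtV psi.

Definition nrm : vfun := fun s t => cross (psi_s s t) (psi_t s t).
Definition tang (s t : R) (v : V3) : V3 :=
  vsub v (vscal (dot v (nrm s t) / dot (nrm s t) (nrm s t)) (nrm s t)).

(* A tangent vector field X on M, given by its coordinate components
   (a, b) : X = a psi_s + b psi_t. *)
Definition tfield := (sfun * sfun)%type.
Definition fieldV (X : tfield) : vfun := fun s t =>
  vadd (vscal (fst X s t) (psi_s s t)) (vscal (snd X s t) (psi_t s t)).
Definition derX (X : tfield) (f : sfun) : sfun := fun s t =>
  fst X s t * ds f s t + snd X s t * dt f s t.
Definition derXV (X : tfield) (F : vfun) : vfun := fun s t =>
  vadd (vscal (fst X s t) (dsV F s t)) (vscal (snd X s t) (dtV F s t)).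
Definition bracket (X Y : tfield) : tfield :=
  ((fun s t => derX X (fst Y) s t - derX Y (fst X) s t),
   (fun s t => derX X (snd Y) s t - derX Y (snd X) s t)).

Definition nabla (X : tfield) (Y : vfun) : vfun := fun s t =>
  tang s t (vadd (derXV X Y s t) (vscal (dot Cz (Y s t)) (fieldV X s t))).

Definition Rcurv (X Y Z : tfield) : vfun := fun s t =>
  vsub (vsub (nabla X (nabla Y (fieldV Z)) s t) (nabla Y (nabla X (fieldV Z)) s t))
       (nabla (bracket X Y) (fieldV Z) s t).

(* orthonormal frame e1 = psi_s, e2 = psi_t / x  (orthonormal when
   x > 0 and x'^2 + z'^2 = 1) *)
Definition e1 : tfield := ((fun _ _ => 1), (fun _ _ => 0)).
Definition e2 : tfield := ((fun _ _ => 0), (fun s _ => / x s)).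

Definition sect_curv (s t : R) : R :=
  / 2 * (dot (Rcurv e1 e2 e2 s t) (fieldV e1 s t)
         + dot (Rcurv e2 e1 e1 s t) (fieldV e2 s t)).
End Surface.

(* Along a circular profile, the unit meridian tangent, the unit parallel tangent and the
   unit normal form an orthonormal frame in which every vector field entering the sectional
   curvature has coefficients depending on s only, and the induced snm-connection acts on
   such coefficients by an explicit first-order formula.  With θ = s/r and x = c1 + r cos θ
   this gives
     K = cos θ / (r x) + sin θ cos θ / (2 x) + cos² θ / 2 + sin θ / (2 r).
   If K were a constant k on I, then 2 r x (K - k) would be a trigonometric polynomial of
   degree 3 in θ vanishing on an interval, with coefficient r²/4 ≠ 0 in front of cos 3θ
   (coming from r² cos³ θ).  Applying D (D² + ω²) (D² + 4 ω²) to such a polynomial kills all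
   harmonics but the third, so its top coefficients must vanish: contradiction. *)

From Pilot Require Import Defs.
From Stdlib Require Import Reals Nsatz Lra.
From Coquelicot Require Import Coquelicot.
Open Scope R_scope.

Lemma V3_ext (u v : V3) : v1 u = v1 v -> v2 u = v2 v -> v3 u = v3 v -> u = v.
Proof.
  destruct u as [[u1 u2] u3], v as [[w1 w2] w3]; unfold v1, v2, v3; cbn.
  intros -> -> ->; reflexivity.
Qed.

Ltac vsimp := unfold vsub, vadd, vscal, dot, cross, mkV, v1, v2, v3 in *; cbn [fst snd] in *.

(* [auto_derive] leaves goals stated in Coquelicot's structures over [R]. *)
Ltac Rfield := match goal with |- @eq _ ?A ?B => change (@eq R A B) end;
  change RinvImpl.Rinv with Rinv; unfold Rdiv in *; field; lra.

(* [field] modulo hypotheses [A_i = B_i], given the polynomial multipliers [k_i] as certificate. *)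
Ltac field_mod k H :=
  match type of H with ?A = ?B => match goal with |- _ = ?R0 =>
    transitivity (R0 + k * (A - B)); [field | rewrite H; field] end end.
Ltac field_mod2 k1 H1 k2 H2 :=
  match type of H1 with ?A1 = ?B1 => match type of H2 with ?A2 = ?B2 =>
  match goal with |- _ = ?R0 =>
    transitivity (R0 + k1 * (A1 - B1) + k2 * (A2 - B2)); [field | rewrite H1, H2; field]
  end end end.

Lemma is_derive_lincomb (f g A B : R -> R) (s f' g' A' B' l : R) :
  is_derive f s f' -> is_derive g s g' -> is_derive A s A' -> is_derive B s B' ->
  l = f' * A s + f s * A' + (g' * B s + g s * B') ->
  is_derive (fun u => f u * A u + g u * B u) s l.
Proof.
  intros Hf Hg HA HB ->.
  exact (is_derive_plus _ _ _ _ _ (is_derive_mult _ _ _ _ _ Hf HA Rmult_comm)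
           (is_derive_mult _ _ _ _ _ Hg HB Rmult_comm)).
Qed.

Lemma Derive_open_ext (U : R -> Prop) (f g : R -> R) (s l : R) :
  open U -> U s -> (forall u, U u -> f u = g u) -> is_derive g s l -> Derive f s = l.
Proof.
  intros HU Hs Hfg Hg. rewrite (Derive_ext_loc f g); [now apply is_derive_unique |].
  exact (locally_open U _ HU Hfg s Hs).
Qed.

Lemma dsV_open_ext (U : R -> Prop) (Y Z : vfun) (s t : R) :
  open U -> U s -> (forall u w, U u -> Y u w = Z u w) -> dsV Y s t = dsV Z s t.
Proof.
  intros HU Hs HYZ. unfold dsV, ds.
  assert (Hloc : locally s (fun u => Y u t = Z u t))
    by exact (locally_open U _ HU (fun u Hu => HYZ u t Hu) s Hs).
  f_equal; apply Derive_ext_loc;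
    apply (filter_imp _ _ (fun u H => f_equal _ H) Hloc).
Qed.

Lemma dtV_ext (Y Z : vfun) (s t : R) : (forall w, Y s w = Z s w) -> dtV Y s t = dtV Z s t.
Proof.
  intros HYZ. unfold dtV, dt.
  f_equal; apply Derive_ext; intros w; now rewrite HYZ.
Qed.

Lemma Rbar_lt_dense (a b : Rbar) : Rbar_lt a b -> exists s : R, Rbar_lt a s /\ Rbar_lt s b.
Proof.
  destruct a as [a' | |], b as [b' | |]; cbn; try tauto; intros Hab.
  - exists ((a' + b') / 2); cbn; lra.
  - exists (a' + 1); cbn; lra.
  - exists (b' - 1); cbn; lra.
  - exists 0; cbn; auto.
Qed.

Lemma cos2_sin2 (t : R) : cos t ^ 2 + sin t ^ 2 = 1.
Proof. rewrite <- (sin2_cos2 t). unfold Rsqr. ring. Qed.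

Section TrigPoly.
Variable w : R.

Record trig3 := Trig3 { tc0 : R; ta1 : R; tb1 : R; ta2 : R; tb2 : R; ta3 : R; tb3 : R }.

Definition trig3_eval (p : trig3) (s : R) : R :=
  tc0 p + ta1 p * cos (w * s) + tb1 p * sin (w * s)
  + ta2 p * cos (2 * (w * s)) + tb2 p * sin (2 * (w * s))
  + ta3 p * cos (3 * (w * s)) + tb3 p * sin (3 * (w * s)).

Definition trig3_deriv (p : trig3) : trig3 :=
  Trig3 0 (w * tb1 p) (- w * ta1 p) (2 * w * tb2 p) (- 2 * w * ta2 p)
        (3 * w * tb3 p) (- 3 * w * ta3 p).

Lemma is_derive_trig3 p s : is_derive (trig3_eval p) s (trig3_eval (trig3_deriv p) s).
Proof. unfold trig3_eval; auto_derive; auto. cbn. ring. Qed.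

Lemma trig3_annihilator p s :
  let D n := trig3_eval (Nat.iter n trig3_deriv p) s in
  D 5%nat + 5 * w ^ 2 * D 3%nat + 4 * w ^ 4 * D 1%nat
    = 120 * w ^ 5 * (tb3 p * cos (3 * (w * s)) - ta3 p * sin (3 * (w * s))) /\
  D 6%nat + 5 * w ^ 2 * D 4%nat + 4 * w ^ 4 * D 2%nat
    = - 360 * w ^ 6 * (ta3 p * cos (3 * (w * s)) + tb3 p * sin (3 * (w * s))).
Proof. intros D; subst D; unfold trig3_eval, trig3_deriv; cbn; split; ring. Qed.

Section Vanishing.
Variables (U : R -> Prop) (p : trig3).
Hypotheses (U_open : open U) (p_vanishes : forall s, U s -> trig3_eval p s = 0).

Lemma trig3_iter_deriv_vanishes n s : U s -> trig3_eval (Nat.iter n trig3_deriv p) s = 0.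
Proof.
  revert s; induction n as [| n IH]; intros s Hs; cbn; auto.
  rewrite <- (is_derive_unique _ _ _ (is_derive_trig3 _ s)).
  apply (Derive_open_ext U _ (fun _ => 0)); auto using is_derive_const.
Qed.

Hypothesis w_neq0 : w <> 0.

Lemma trig3_top_coefs_eq0 s : U s -> ta3 p = 0 /\ tb3 p = 0.
Proof.
  intros Hs.
  destruct (trig3_annihilator p s) as [E5 E6]; cbv beta zeta in E5, E6.
  rewrite !(trig3_iter_deriv_vanishes _ s Hs) in E5.
  rewrite !(trig3_iter_deriv_vanishes _ s Hs) in E6.
  assert (Hw : forall k n, k <> 0 -> k * w ^ n <> 0).
  { intros k n Hk. apply Rmult_integral_contrapositive_currified; auto using pow_nonzero. }
  assert (Hsin : tb3 p * cos (3 * (w * s)) - ta3 p * sin (3 * (w * s)) = 0).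
  { apply (Rmult_eq_reg_l (120 * w ^ 5)); [lra | apply Hw; lra]. }
  assert (Hcos : ta3 p * cos (3 * (w * s)) + tb3 p * sin (3 * (w * s)) = 0).
  { apply (Rmult_eq_reg_l (-360 * w ^ 6)); [lra | apply Hw; lra]. }
  pose proof (sin2_cos2 (3 * (w * s))) as Hpyth; unfold Rsqr in Hpyth.
  split; nsatz.
Qed.
End Vanishing.
End TrigPoly.

Section CircleArc.
Variables (a b : Rbar) (x z : R -> R) (c1 c2 r : R).
Hypothesis r_pos : 0 < r.
Hypothesis profile : forall s : R, Rbar_lt a s -> Rbar_lt s b ->
  x s = c1 + r * cos (s / r) /\ z s = c2 + r * sin (s / r) /\ 0 < x s.

Definition on_I (u : R) : Prop := Rbar_lt a u /\ Rbar_lt u b.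
Definition cosr (u : R) : R := cos (u / r).
Definition sinr (u : R) : R := sin (u / r).
Definition xr (u : R) : R := c1 + r * cosr u.

Lemma open_on_I : open on_I.
Proof. apply open_and; [apply open_Rbar_gt | apply open_Rbar_lt]. Qed.

Lemma x_on_I u : on_I u -> x u = xr u.
Proof. intros [Ha Hb]. apply (profile u Ha Hb). Qed.

Lemma z_on_I u : on_I u -> z u = c2 + r * sinr u.
Proof. intros [Ha Hb]. apply (profile u Ha Hb). Qed.

Lemma xr_neq0 u : on_I u -> xr u <> 0.
Proof.
  intros Hu. rewrite <- x_on_I by exact Hu.
  destruct Hu as [Ha Hb]. apply Rgt_not_eq, (profile u Ha Hb).
Qed.

Lemma cosr2_sinr2 u : cosr u ^ 2 + sinr u ^ 2 = 1.
Proof. apply cos2_sin2. Qed.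

Definition Es (u t : R) : V3 := mkV (- sinr u * cos t) (- sinr u * sin t) (cosr u).
Definition Et (t : R) : V3 := mkV (- sin t) (cos t) 0.
Definition Nu (u t : R) : V3 := mkV (cosr u * cos t) (cosr u * sin t) (sinr u).
Definition frame (al be u t : R) : V3 := vadd (vscal al (Es u t)) (vscal be (Et t)).

Lemma frame_sub al be ga de u t :
  vsub (frame al be u t) (frame ga de u t) = frame (al - ga) (be - de) u t.
Proof. unfold frame, Es, Et; apply V3_ext; vsimp; ring. Qed.

Lemma frame_dot al be ga de u t : dot (frame al be u t) (frame ga de u t) = al * ga + be * de.
Proof.
  pose proof (cos2_sin2 t) as Ht; pose proof (cosr2_sinr2 u) as Hu.
  unfold frame, Es, Et; vsimp. field_mod2 (al * ga * sinr u ^ 2 + be * de) Ht (al * ga) Hu.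
Qed.

Lemma psi_s_on_I u t : on_I u -> psi_s x z u t = Es u t.
Proof.
  intros Hu. unfold psi_s, dsV, ds, psi, Es. apply V3_ext; vsimp.
  - apply (Derive_open_ext on_I _ (fun w => xr w * cos t)); auto using open_on_I.
    + intros w Hw; now rewrite x_on_I.
    + unfold xr, cosr, sinr. auto_derive; auto. Rfield.
  - apply (Derive_open_ext on_I _ (fun w => xr w * sin t)); auto using open_on_I.
    + intros w Hw; now rewrite x_on_I.
    + unfold xr, cosr, sinr. auto_derive; auto. Rfield.
  - apply (Derive_open_ext on_I _ (fun w => c2 + r * sinr w)); auto using open_on_I, z_on_I.
    unfold cosr, sinr. auto_derive; auto. Rfield.
Qed.

Lemma psi_t_eq u t : psi_t x z u t = vscal (x u) (Et t).
Proof.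
  unfold psi_t, dtV, dt, psi, Et. apply V3_ext; vsimp.
  - apply is_derive_unique. auto_derive; auto. ring.
  - apply is_derive_unique. auto_derive; auto. ring.
  - rewrite Derive_const. ring.
Qed.

Lemma nrm_on_I u t : on_I u -> nrm x z u t = vscal (- xr u) (Nu u t).
Proof.
  intros Hu. unfold nrm. rewrite psi_s_on_I, psi_t_eq, x_on_I by exact Hu.
  pose proof (cos2_sin2 t) as Ht. unfold Es, Et, Nu. apply V3_ext; vsimp.
  - ring.
  - ring.
  - field_mod (- xr u * sinr u) Ht.
Qed.

Lemma tang_frame_normal al be ga u t : on_I u ->
  tang x z u t (vadd (frame al be u t) (vscal ga (Nu u t))) = frame al be u t.
Proof.
  intros Hu. unfold tang. rewrite nrm_on_I by exact Hu.
  pose proof (xr_neq0 u Hu); pose proof (cos2_sin2 t) as Ht; pose proof (cosr2_sinr2 u) as Hu'.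
  set (v := vadd (frame al be u t) (vscal ga (Nu u t))).
  assert (Hv : dot v (vscal (- xr u) (Nu u t)) = - xr u * ga)
    by (subst v; unfold frame, Es, Et, Nu; vsimp;
        field_mod2 (xr u * (al * sinr u * cosr u - ga * cosr u ^ 2)) Ht (- xr u * ga) Hu').
  assert (HN : dot (vscal (- xr u) (Nu u t)) (vscal (- xr u) (Nu u t)) = xr u ^ 2)
    by (unfold Nu; vsimp; field_mod2 (xr u ^ 2 * cosr u ^ 2) Ht (xr u ^ 2) Hu').
  rewrite Hv, HN. subst v. unfold frame, Es, Et, Nu. apply V3_ext; vsimp; field; auto.
Qed.

Lemma is_derive_cosr u : is_derive cosr u (- sinr u / r).
Proof. unfold cosr, sinr. auto_derive; auto. Rfield. Qed.

Section FrameField.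
Variables (Y : vfun) (f g : R -> R).
Hypothesis Y_frame : forall u w, on_I u -> Y u w = frame (f u) (g u) u w.

Lemma dsV_frame s t f' g' : on_I s -> is_derive f s f' -> is_derive g s g' ->
  dsV Y s t = vadd (frame f' g' s t) (vscal (- f s / r) (Nu s t)).
Proof.
  intros Hs Hf Hg.
  rewrite (dsV_open_ext on_I Y (fun u w => frame (f u) (g u) u w)); auto using open_on_I.
  unfold dsV, ds. apply V3_ext; apply is_derive_unique;
    (eapply is_derive_lincomb; [exact Hf | exact Hg | | |]).
  all: unfold frame, Es, Et, Nu, cosr, sinr; vsimp.
  all: try (auto_derive; [auto | reflexivity]).
  all: Rfield.
Qed.

Lemma dtV_frame s t : on_I s ->
  dtV Y s t = vadd (frame (g s * sinr s) (- f s * sinr s) s t) (vscal (- g s * cosr s) (Nu s t)).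
Proof.
  intros Hs. rewrite (dtV_ext Y (fun _ w => frame (f s) (g s) s w)) by auto.
  pose proof (cosr2_sinr2 s) as Hu.
  unfold dtV, dt, frame, Es, Et, Nu; apply V3_ext; vsimp; apply is_derive_unique; auto_derive; auto.
  - field_mod (g s * cos t) Hu.
  - field_mod (g s * sin t) Hu.
  - ring.
Qed.

Lemma nabla_frame (P : tfield) s t f' g' : on_I s -> is_derive f s f' -> is_derive g s g' ->
  nabla x z P Y s t =
  frame (fst P s t * f' + snd P s t * g s * sinr s + f s * cosr s * fst P s t)
        (fst P s t * g' - snd P s t * f s * sinr s + f s * cosr s * snd P s t * xr s) s t.
Proof.
  intros Hs Hf Hg. unfold nabla, derXV, fieldV.
  rewrite (dsV_frame s t f' g'), dtV_frame, psi_s_on_I, psi_t_eq, x_on_I, Y_frame by auto.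
  match goal with |- _ = frame ?al ?be s t =>
    rewrite <- (tang_frame_normal al be (- fst P s t * f s / r - snd P s t * g s * cosr s) s t Hs)
  end.
  f_equal. unfold frame, Cz, Es, Et, Nu; apply V3_ext; vsimp; Rfield.
Qed.
End FrameField.

Lemma fieldV_e1 u w : on_I u -> fieldV x z e1 u w = frame 1 0 u w.
Proof.
  intros Hu. unfold fieldV, e1; cbn [fst snd]. rewrite psi_s_on_I, psi_t_eq by exact Hu.
  unfold frame, Es, Et; apply V3_ext; vsimp; ring.
Qed.

Lemma fieldV_e2 u w : on_I u -> fieldV x z (e2 x) u w = frame 0 1 u w.
Proof.
  intros Hu. pose proof (xr_neq0 u Hu). unfold fieldV, e2; cbn [fst snd].
  rewrite psi_s_on_I, psi_t_eq, x_on_I by exact Hu.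
  unfold frame, Es, Et; apply V3_ext; vsimp; field; auto.
Qed.

Lemma nabla_e2_e2 u w : on_I u ->
  nabla x z (e2 x) (fieldV x z (e2 x)) u w = frame (sinr u / xr u) 0 u w.
Proof.
  intros Hu. pose proof (xr_neq0 u Hu).
  rewrite (nabla_frame _ (fun _ => 0) (fun _ => 1) fieldV_e2 _ u w 0 0); auto using is_derive_const.
  unfold e2; cbn [fst snd]. rewrite x_on_I by exact Hu. f_equal; field; auto.
Qed.

Lemma nabla_e1_e2 u w : on_I u -> nabla x z e1 (fieldV x z (e2 x)) u w = frame 0 0 u w.
Proof.
  intros Hu.
  rewrite (nabla_frame _ (fun _ => 0) (fun _ => 1) fieldV_e2 _ u w 0 0); auto using is_derive_const.
  unfold e1; cbn [fst snd]. f_equal; ring.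
Qed.

Lemma nabla_e1_e1 u w : on_I u -> nabla x z e1 (fieldV x z e1) u w = frame (cosr u) 0 u w.
Proof.
  intros Hu.
  rewrite (nabla_frame _ (fun _ => 1) (fun _ => 0) fieldV_e1 _ u w 0 0); auto using is_derive_const.
  unfold e1; cbn [fst snd]. f_equal; ring.
Qed.

Lemma nabla_e2_e1 u w : on_I u ->
  nabla x z (e2 x) (fieldV x z e1) u w = frame 0 (cosr u - sinr u / xr u) u w.
Proof.
  intros Hu. pose proof (xr_neq0 u Hu).
  rewrite (nabla_frame _ (fun _ => 1) (fun _ => 0) fieldV_e1 _ u w 0 0); auto using is_derive_const.
  unfold e2; cbn [fst snd]. rewrite x_on_I by exact Hu. f_equal; field; auto.
Qed.

Lemma is_derive_inv_xr s : on_I s -> is_derive (fun v => / xr v) s (sinr s / xr s ^ 2).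
Proof.
  intros Hs. pose proof (xr_neq0 s Hs). unfold xr, cosr, sinr in *.
  auto_derive; auto. Rfield.
Qed.

Lemma is_derive_sinr_div_xr s : on_I s ->
  is_derive (fun v => sinr v / xr v) s (cosr s / (r * xr s) + sinr s ^ 2 / xr s ^ 2).
Proof.
  intros Hs. pose proof (xr_neq0 s Hs). unfold xr, cosr, sinr in *.
  auto_derive; [unfold Rdiv; auto |]. Rfield.
Qed.

Lemma bracket_e1_e2 s t : on_I s ->
  fst (Defs.bracket e1 (e2 x)) s t = 0 /\ snd (Defs.bracket e1 (e2 x)) s t = sinr s / xr s ^ 2.
Proof.
  intros Hs. unfold Defs.bracket, derX, ds, dt, e1, e2; cbn [fst snd]. rewrite !Derive_const.
  rewrite (Derive_open_ext on_I (fun u => / x u) (fun v => / xr v) s _ open_on_I Hs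
             (fun u Hu => f_equal Rinv (x_on_I u Hu)) (is_derive_inv_xr s Hs)).
  split; ring.
Qed.

Lemma bracket_e2_e1 s t : on_I s ->
  fst (Defs.bracket (e2 x) e1) s t = 0 /\ snd (Defs.bracket (e2 x) e1) s t = - (sinr s / xr s ^ 2).
Proof.
  intros Hs. unfold Defs.bracket, derX, ds, dt, e1, e2; cbn [fst snd]. rewrite !Derive_const.
  rewrite (Derive_open_ext on_I (fun u => / x u) (fun v => / xr v) s _ open_on_I Hs
             (fun u Hu => f_equal Rinv (x_on_I u Hu)) (is_derive_inv_xr s Hs)).
  split; ring.
Qed.

Lemma Rcurv_e1_e2_e2 s t : on_I s ->
  Rcurv x z e1 (e2 x) (e2 x) s t = frame (cosr s / (r * xr s) + sinr s * cosr s / xr s) 0 s t.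
Proof.
  intros Hs. pose proof (xr_neq0 s Hs). destruct (bracket_e1_e2 s t Hs) as [B1 B2]. unfold Rcurv.
  rewrite (nabla_frame _ (fun v => sinr v / xr v) (fun _ => 0) nabla_e2_e2 e1 s t _ 0 Hs
             (is_derive_sinr_div_xr s Hs) (is_derive_const _ _)),
          (nabla_frame _ (fun _ => 0) (fun _ => 0) nabla_e1_e2 (e2 x) s t 0 0 Hs
             (is_derive_const _ _) (is_derive_const _ _)),
          (nabla_frame _ (fun _ => 0) (fun _ => 1) fieldV_e2 _ s t 0 0 Hs
             (is_derive_const _ _) (is_derive_const _ _)).
  rewrite B1, B2, !frame_sub. unfold e1, e2; cbn [fst snd]. rewrite x_on_I by exact Hs.
  f_equal; Rfield.
Qed.

Lemma Rcurv_e2_e1_e1 s t : on_I s ->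
  Rcurv x z (e2 x) e1 e1 s t = frame 0 (cosr s ^ 2 + sinr s / r + cosr s / (r * xr s)) s t.
Proof.
  intros Hs. pose proof (xr_neq0 s Hs). destruct (bracket_e2_e1 s t Hs) as [B1 B2]. unfold Rcurv.
  rewrite (nabla_frame _ cosr (fun _ => 0) nabla_e1_e1 (e2 x) s t _ 0 Hs
             (is_derive_cosr s) (is_derive_const _ _)),
          (nabla_frame _ (fun _ => 0) (fun v => cosr v - sinr v / xr v) nabla_e2_e1 e1 s t 0 _ Hs
             (is_derive_const _ _)
             (is_derive_minus _ _ _ _ _ (is_derive_cosr s) (is_derive_sinr_div_xr s Hs))),
          (nabla_frame _ (fun _ => 1) (fun _ => 0) fieldV_e1 _ s t 0 0 Hs
             (is_derive_const _ _) (is_derive_const _ _)).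
  rewrite B1, B2, !frame_sub. unfold e1, e2; cbn [fst snd]. rewrite x_on_I by exact Hs.
  f_equal; [| unfold minus, plus, opp; cbn]; Rfield.
Qed.

Definition K_arc (s : R) : R :=
  cosr s / (r * xr s) + sinr s * cosr s / (2 * xr s) + cosr s ^ 2 / 2 + sinr s / (2 * r).

Lemma sect_curv_on_I s t : on_I s -> sect_curv x z s t = K_arc s.
Proof.
  intros Hs. pose proof (xr_neq0 s Hs). unfold sect_curv.
  rewrite Rcurv_e1_e2_e2, Rcurv_e2_e1_e1, fieldV_e1, fieldV_e2, !frame_dot by exact Hs.
  unfold K_arc. field; split; auto; lra.
Qed.

Definition K_arc_trig (k : R) : trig3 :=
  Trig3 (r * c1 / 2 - 2 * r * k * c1) (3 * r ^ 2 / 4 + 2 - 2 * r ^ 2 * k) c1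
        (r * c1 / 2) r (r ^ 2 / 4) 0.

Lemma K_arc_trig_eval k s : xr s <> 0 ->
  trig3_eval (/ r) (K_arc_trig k) s = 2 * r * xr s * (K_arc s - k).
Proof.
  intros Hx.
  assert (Hpoly : 2 * r * xr s * (K_arc s - k)
    = 2 * cosr s + r * sinr s * cosr s + r * cosr s ^ 2 * xr s + sinr s * xr s - 2 * r * k * xr s)
    by (unfold K_arc; field; split; auto; lra).
  rewrite Hpoly. unfold trig3_eval, K_arc_trig, xr, cosr, sinr; cbn [tc0 ta1 tb1 ta2 tb2 ta3 tb3].
  replace (/ r * s) with (s / r) by (unfold Rdiv; ring).
  replace (3 * (s / r)) with (2 * (s / r) + s / r) by ring.
  rewrite cos_plus, sin_plus, cos_2a, sin_2a.
  pose proof (cos2_sin2 (s / r)) as Hp.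
  field_mod (- (r * c1 / 2 + 3 * r ^ 2 * cos (s / r) / 4)) Hp.
Qed.
End CircleArc.

Theorem theorem4p4 (a b : Rbar) (x z : R -> R) (c1 c2 r : R) :
  Rbar_lt a b ->
  0 < r ->
  (forall s : R, Rbar_lt a s -> Rbar_lt s b ->
     x s = c1 + r * cos (s / r) /\ z s = c2 + r * sin (s / r) /\ 0 < x s) ->
  ~ (exists k : R, forall s t : R, Rbar_lt a s -> Rbar_lt s b ->
       sect_curv x z s t = k).
Proof.
  intros Hab Hr Hprofile [k Hk].
  destruct (Rbar_lt_dense a b Hab) as [s0 Hs0].
  assert (Hvanish : forall s, on_I a b s -> trig3_eval (/ r) (K_arc_trig c1 r k) s = 0).
  { intros s Hs.
    rewrite (K_arc_trig_eval c1 r Hr k s (xr_neq0 a b x z c1 c2 r Hprofile s Hs)).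
    rewrite <- (sect_curv_on_I a b x z c1 c2 r Hr Hprofile s 0 Hs), (Hk s 0) by apply Hs.
    ring. }
  destruct (trig3_top_coefs_eq0 (/ r) (on_I a b) (K_arc_trig c1 r k) (open_on_I a b) Hvanish
              (Rinv_neq_0_compat r (Rgt_not_eq r 0 Hr)) s0 Hs0) as [Htop _].
  cbn in Htop. nra.
Qed.
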